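(* Let $k$ and $n$ be sufficiently large and let $\Phi$ be a $k$-CNF on $x_1,\dots,x_n$ with $m$ clauses that is quasirandom. Then $\mathrm{suc}\big(\Phi,\lceil\exp(n/k^2)\rceil\big)\leq \exp(-n/k^2)$.
   Context: Let $\Phi=\Phi_1\wedge\dots\wedge\Phi_m$ be a $k$-CNF on $x_1,\dots,x_n$, with clauses $\Phi_i=\Phi_{i1}\vee\dots\vee\Phi_{ik}$; for a literal $l$, $|l|$ is its underlying variable. Set $\rho=2^{-k}m/n$ and $\kappa=\ln k/k$. For $\sigma\in\{0,1\}^n$, $U_\Phi(\sigma)$ is the set of indices of clauses unsatisfied by $\sigma$ and $\mathcal U_\Phi(\sigma)=|U_\Phi(\sigma)|$. $T(\Phi)=\{\tau\in\{0,1\}^n:\mathcal U_\Phi(\tau)\le n\rho/10\}$. $\mathrm{dist}$ is Hamming distance, and $\Delta(\sigma,\tau)=\{x: \sigma(x)\ne\tau(x)\}$. For $r_1,r_2\ge0$, $\mathcal D_\sigma(r_1,r_2)=\{\tau\in\{0,1\}^n:\lfloor r_1\kappa n\rfloor\le \mathrm{dist}(\sigma,\tau)\le\lfloor r_2\kappa n\rfloor\}$. For $W\subseteq\{x_1,\dots,x_n\}$, $X_\Phi(W,\sigma)=\sum_{i\in U_\Phi(\sigma)}\sum_{j\in[k]}\mathbf 1\{|\Phi_{ij}|\in W\}$. A mist of $\Phi$ is a set $\mathcal M\subseteq T(\Phi)$ such that (MI1) distinct elements of $\mathcal M$ have Hamming distance at least $2\kappa n$, and (MI2) for every $\sigma\in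 T(\Phi)$ there is $\mu\in\mathcal M$ with $\mathrm{dist}(\mu,\sigma)\le 2\kappa n$. Let $\mathcal D(\Phi,\mathcal M)=\bigcup_{\sigma\in\mathcal M}\mathcal D_\sigma(0,10)$. $\Phi$ is quasirandom if there is a mist $\mathcal M$ with: (Q1) $|\mathcal D(\Phi,\mathcal M)|\le 2^n\exp(-2n/k^2)$; (Q2) for every $\tau\in\{0,1\}^n$, $|\mathcal M\cap\mathcal D_\tau(0,10)|\le k$; (Q3) for every $\mu\in\mathcal M$ and every $\sigma\in\mathcal D_\mu(0,100)\setminus T(\Phi)$, $X_\Phi(\Delta(\mu,\sigma),\sigma)\le k\,\mathcal U_\Phi(\sigma)/10$. Walksat$(\Phi,\omega)$: choose $\sigma^{[0]}$ uniformly at random; for $i=0,\dots,\omega$, if $\sigma^{[i]}$ satisfies $\Phi$ output it and halt, else pick $i'\in U_\Phi(\sigma^{[i]})$ and $j\in[k]$ uniformly at random and flip the variable $|\Phi_{i'j}|$ to get $\sigma^{[i+1]}$; otherwise output failure. $\mathrm{suc}(\Phi,\omega)$ is the probability over the algorithm's randomness that it finds a satisfying assignment. *)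

From mathcomp Require Import all_boot.
From Stdlib Require Import Reals ZArith.

Set Implicit Arguments.
Unset Strict Implicit.
Unset Printing Implicit Defensive.

(* Variables x_1..x_n are the elements of 'I_n.
   A literal is a pair (variable, sign); the literal (x, b) is true under
   sigma iff sigma x = b.  An assignment is sigma : {0,1}^n. *)
Definition assignment (n : nat) := {ffun 'I_n -> bool}.
Definition literal (n : nat) := ('I_n * bool)%type.
Definition lvar (n : nat) (l : literal n) : 'I_n := l.1.
Definition lit_true (n : nat) (s : assignment n) (l : literal n) : bool :=
  s (lvar l) == l.2.

Definition kcnf (n k m : nat) := {ffun 'I_m -> {ffun 'I_k -> literal n}}.

Section Defs.
Variables (n k m : nat) (Phi : kcnf n k m).

Definition clause_sat (s : assignment n) (i : 'I_m) : bool :=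
  [exists j : 'I_k, lit_true s (Phi i j)].

Definition Uset (s : assignment n) : {set 'I_m} :=
  [set i | ~~ clause_sat s i].
Definition Ucnt (s : assignment n) : nat := #|Uset s|.

Definition satisfies (s : assignment n) : bool := Ucnt s == 0.

Definition rho : R := (INR m / (2 ^ k * INR n))%R.
Definition kappa : R := (ln (INR k) / INR k)%R.

Definition inT (t : assignment n) : Prop :=
  (INR (Ucnt t) <= INR n * rho / 10)%R.

Definition Delta (s t : assignment n) : {set 'I_n} := [set x | s x != t x].
Definition dist (s t : assignment n) : nat := #|Delta s t|.

Definition inD (s : assignment n) (r1 r2 : R) (t : assignment n) : bool :=
  ((Int_part (r1 * kappa * INR n) <=? Z.of_nat (dist s t))
   && (Z.of_nat (dist s t) <=? Int_part (r2 * kappa * INR n)))%Z.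

Definition Xcnt (W : {set 'I_n}) (s : assignment n) : nat :=
  \sum_(i in Uset s) \sum_(j < k) (lvar (Phi i j) \in W).

Definition is_mist (M : {set assignment n}) : Prop :=
  (forall mu, mu \in M -> inT mu) /\
  (forall mu nu, mu \in M -> nu \in M -> mu <> nu ->
     (2 * kappa * INR n <= INR (dist mu nu))%R) /\
  (forall s, inT s -> exists2 mu, mu \in M &
     (INR (dist mu s) <= 2 * kappa * INR n)%R).

Definition DPhiM (M : {set assignment n}) : {set assignment n} :=
  [set t | [exists s in M, inD s 0 10 t]].

Definition quasirandom : Prop :=
  exists M : {set assignment n},
    is_mist M /\
    (INR #|DPhiM M| <= 2 ^ n * exp (- (2 * INR n / (INR k ^ 2))))%R /\
    (forall t : assignment n, #|[set mu in M | inD t 0 10 mu]| <= k) /\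
    (forall mu s, mu \in M -> inD mu 0 100 s -> ~ inT s ->
       (INR (Xcnt (Delta mu s) s) <= INR k * INR (Ucnt s) / 10)%R).

Definition flip (s : assignment n) (x : 'I_n) : assignment n :=
  [ffun y => if y == x then ~~ s y else s y].

(* walk_succ r s: probability that Walksat, started in the current
   assignment s with r flips still allowed, outputs a satisfying assignment.
   Each step picks i' in U uniformly and j in [k] uniformly, i.e. the pair
   (i', j) uniformly among the |U| * k pairs. *)
Fixpoint walk_succ (r : nat) (s : assignment n) : R :=
  if satisfies s then 1%R else
  match r with
  | 0 => 0%R
  | r'.+1 =>
      (/ (INR (Ucnt s) * INR k) *
       \big[Rplus/0%R]_(i in Uset s) \big[Rplus/0%R]_(j < k)
          walk_succ r' (flip s (lvar (Phi i j))))%R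
  end.

(* suc(Phi, omega): iterations i = 0..omega check sigma^[0..omega], so at
   most omega flips are performed; sigma^[0] is uniform on {0,1}^n. *)
Definition suc (omega : nat) : R :=
  (/ 2 ^ n * \big[Rplus/0%R]_(s : assignment n) walk_succ omega s)%R.

End Defs.

(* ceiling of a real, as a natural number (for nonnegative arguments) *)
Definition ceil_nat (x : R) : nat := Z.to_nat (- Int_part (- x))%Z.

(* Each mist point mu carries the weight 2^c / 2^d, where d is the Hamming
   distance from the current assignment to mu, and weight 0 once d >= N
   (c ~ 2 kappa n, N ~ 10 kappa n).  The potential of an assignment is the
   total weight, capped at 1.  It equals 1 on T(Phi), which lies within
   distance c of the mist.  Outside T(Phi), (Q3) says that at most a tenth of
   the Walksat moves approach a given mu; since approaching doubles the weight
   and receding halves it, the expected weight does not grow, except for a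
   leakage of 2^c / 2^N at each of the at most k (by (Q2)) mist points at
   distance exactly N.  So the probability of success within r more steps is
   at most the capped potential plus r k 2^c / 2^N.  Averaged over the uniform
   start, the potential contributes at most the density of the
   N-neighbourhood of the mist, which (Q1) bounds by exp(-2n/k^2), and the
   leakage term is negligible because N - c ~ 8 n ln k / k. *)

From Pilot Require (* Reals also exports a [dist]; re-importing gives [Defs.dist] priority. *)
Import Defs.
From HB Require Import structures.
From mathcomp Require Import all_boot.
From Stdlib Require Import Reals ZArith Lra Lia Classical.
Import Defs.

Set Implicit Arguments.
Unset Strict Implicit.

Open Scope R_scope.

HB.instance Definition _ := Monoid.isComLaw.Build R 0 Rplus
  (fun a b c => esym (Rplus_assoc a b c)) Rplus_comm Rplus_0_l.

Lemma sumR_le (I : finType) (P : pred I) (F G : I -> R) :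
  (forall i, P i -> F i <= G i) ->
  \big[Rplus/0]_(i | P i) F i <= \big[Rplus/0]_(i | P i) G i.
Proof. by move=> FG; apply: (big_ind2 (fun x y => x <= y)) => *; [lra|lra|apply: FG]. Qed.

Lemma sumR_ge0 (I : finType) (P : pred I) (F : I -> R) :
  (forall i, P i -> 0 <= F i) -> 0 <= \big[Rplus/0]_(i | P i) F i.
Proof. by move=> F0; apply: (big_ind (fun x => 0 <= x)) => *; [lra|lra|apply: F0]. Qed.

Lemma sumR_mull (I : finType) (P : pred I) (F : I -> R) a :
  \big[Rplus/0]_(i | P i) (a * F i) = a * \big[Rplus/0]_(i | P i) F i.
Proof. by apply: (big_rec2 (fun x y => x = a * y)) => [|i x y _ ->]; ring. Qed.

Lemma sumR_split (I : finType) (P : pred I) (F G : I -> R) :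
  \big[Rplus/0]_(i | P i) (F i + G i)
  = \big[Rplus/0]_(i | P i) F i + \big[Rplus/0]_(i | P i) G i.
Proof. exact: big_split. Qed.

Lemma iter_Rplus (p : nat) a : ssrnat.iter p (Rplus a) 0 = INR p * a.
Proof. by elim: p => [|p IH]; rewrite ?iterS ?IH ?S_INR /=; ring. Qed.

Lemma sumR_const (I : finType) (A : {pred I}) a :
  \big[Rplus/0]_(i in A) a = INR #|A| * a.
Proof. by rewrite big_const iter_Rplus. Qed.

Lemma sumR_const_ord (p : nat) a : \big[Rplus/0]_(i < p) a = INR p * a.
Proof. by rewrite big_const_ord iter_Rplus. Qed.

Lemma INR_sum (I : finType) (P : pred I) (F : I -> nat) :
  INR (\sum_(i | P i) F i) = \big[Rplus/0]_(i | P i) INR (F i).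
Proof. exact: (big_morph INR plus_INR). Qed.

Lemma sumR_ge_term (I : finType) (A : {pred I}) (F : I -> R) x :
  (forall y, 0 <= F y) -> x \in A -> F x <= \big[Rplus/0]_(y in A) F y.
Proof.
move=> F0 Ax; rewrite (bigD1 x) //=.
have : 0 <= \big[Rplus/0]_(y in A | y != x) F y by apply: sumR_ge0.
lra.
Qed.

Lemma INR_expn2 (p : nat) : INR (expn 2 p) = 2 ^ p.
Proof. by elim: p => [|p IH]; rewrite ?expnS ?mult_INR ?IH. Qed.

Lemma pow2_ratio_ge0 (a b : nat) : 0 <= 2 ^ a / 2 ^ b.
Proof. by apply: Rle_mult_inv_pos; [apply: pow_le | apply: pow_lt]; lra. Qed.

Section Hamming.
Variables (n k m : nat) (Phi : kcnf n k m).

Lemma Delta_flip (mu s : assignment n) x :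
  Delta mu (flip s x) = if x \in Delta mu s then Delta mu s :\ x else x |: Delta mu s.
Proof.
apply/setP=> y; rewrite /flip; case: ifP; rewrite !inE ffunE;
  by case: (eqVneq y x) => [->|] //=; case: (mu x); case: (s x).
Qed.

Lemma dist_sym (s t : assignment n) : dist s t = dist t s.
Proof. by rewrite /dist (_ : Delta s t = Delta t s) //; apply/setP=> x; rewrite !inE eq_sym. Qed.

Lemma dist_flip (mu s : assignment n) x :
  dist mu (flip s x) = if x \in Delta mu s then (dist mu s).-1 else (dist mu s).+1.
Proof.
rewrite /dist Delta_flip; case: ifP => Dx.
- by rewrite (cardsD1 x (Delta mu s)) Dx.
- by rewrite cardsU1 Dx.
Qed.

Lemma sumR_moves_const s a :
  \big[Rplus/0]_(i in Uset Phi s) \big[Rplus/0]_(j < k) a = INR (Ucnt Phi s) * INR k * a.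
Proof. by under eq_bigr => i _ do rewrite sumR_const_ord; rewrite sumR_const Rmult_assoc. Qed.

(* A move flips a variable of [Delta mu s] exactly [Xcnt] times out of
   [Ucnt * k], and each move changes the distance to [mu] by one. *)
Lemma sumR_moves_dist (f : nat -> R) (mu s : assignment n) :
  \big[Rplus/0]_(i in Uset Phi s) \big[Rplus/0]_(j < k) f (dist mu (flip s (lvar (Phi i j))))
  = INR (Ucnt Phi s) * INR k * f (dist mu s).+1
    + (f (dist mu s).-1 - f (dist mu s).+1) * INR (Xcnt Phi (Delta mu s) s).
Proof.
rewrite /Xcnt INR_sum -sumR_moves_const -sumR_mull -sumR_split /=.
apply: eq_bigr => i _; rewrite INR_sum -sumR_mull -sumR_split /=.
by apply: eq_bigr => j _; rewrite dist_flip; case: (_ \in _) => /=; ring.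
Qed.

End Hamming.

Lemma drift_bound (K X A B h e : R) :
  0 <= X <= K / 10 -> 0 <= B <= h / 2 -> A <= 2 * h + 2 * e -> 0 <= e ->
  K * B + (A - B) * X <= K * (h + e).
Proof.
move=> [X0 XK] [B0 Bh] Ah e0.
have : 0 <= (h / 2 - B) * (K - X) by apply: Rmult_le_pos; lra.
have : 0 <= (2 * h + 2 * e - A) * X by apply: Rmult_le_pos; lra.
have : 0 <= (h + e) * (K / 10 - X) by apply: Rmult_le_pos; lra.
by nra.
Qed.

Lemma satisfies_inT n k m (Phi : kcnf n k m) s : satisfies Phi s -> inT Phi s.
Proof.
rewrite /satisfies /inT /rho => /eqP ->; rewrite INR_0.
case: (posnP n) => [-> | n_gt0]; first by rewrite INR_0; lra.
have n0 : 0 < INR n by apply/lt_0_INR/ltP.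
have : 0 <= INR m / (2 ^ k * INR n).
  by apply: Rle_mult_inv_pos; [apply: pos_INR | apply: Rmult_lt_0_compat; [apply: pow_lt|]; lra].
by nra.
Qed.

Section Potential.
Variables (n k m : nat) (Phi : kcnf n k m) (M : {set assignment n}) (c N : nat).

Definition weight (d : nat) : R := if (d < N)%nat then 2 ^ c / 2 ^ d else 0.

Definition potential (s : assignment n) : R :=
  \big[Rplus/0]_(mu in M) weight (dist mu s).

Definition capped_potential (s : assignment n) : R := Rmin 1 (potential s).

Lemma weight_ge0 d : 0 <= weight d.
Proof. by rewrite /weight; case: ifP => _; [apply: pow2_ratio_ge0 | lra]. Qed.

Lemma weight_eq0 d : (N <= d)%nat -> weight d = 0.
Proof. by rewrite /weight leqNgt => /negbTE ->. Qed.

Lemma weightS d : weight d.+1 <= weight d / 2.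
Proof.
have := weight_ge0 d; rewrite /weight; case: (ltnP d.+1 N) => [dN | _] w0; last lra.
rewrite (ltn_trans (ltnSn d) dN) /=; right; field; apply: pow_nonzero; lra.
Qed.

Lemma weight_pred d :
  weight d.-1 <= 2 * weight d + (if d == N then 2 * (2 ^ c / 2 ^ N) else 0).
Proof.
have := weight_ge0 d; have := pow2_ratio_ge0 c N.
case: d => [|d] /= e0 w0; first by case: ifP => _; lra.
rewrite /weight; case: (ltngtP d.+1 N) => dN.
- by rewrite /=; right; field; apply: pow_nonzero; lra.
- lra.
- by rewrite -dN /=; right; field; apply: pow_nonzero; lra.
Qed.

Lemma potential_ge0 s : 0 <= potential s.
Proof. by apply: sumR_ge0 => mu _; apply: weight_ge0. Qed.

Lemma capped_potential_bounds s : 0 <= capped_potential s <= 1.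
Proof. by rewrite /capped_potential /Rmin; have := potential_ge0 s; case: Rle_dec; lra. Qed.

Lemma capped_potential_near mu s :
  (c < N)%nat -> mu \in M -> (dist mu s <= c)%nat -> capped_potential s = 1.
Proof.
move=> cN Mmu dc; apply: Rmin_left.
have : weight (dist mu s) <= potential s by apply: sumR_ge_term => // y; apply: weight_ge0.
rewrite /weight (leq_ltn_trans dc cN); suff : 1 <= 2 ^ c / 2 ^ dist mu s by lra.
have d0 : 0 < 2 ^ dist mu s by apply: pow_lt; lra.
apply: (Rmult_le_reg_r _ _ _ d0); rewrite /Rdiv Rmult_assoc Rinv_l; last lra.
by rewrite Rmult_1_l Rmult_1_r; apply: Rle_pow; [lra | apply/leP].
Qed.

Lemma capped_potential_far s :
  (forall mu, mu \in M -> (N <= dist mu s)%nat) -> capped_potential s = 0.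
Proof.
move=> far; rewrite /capped_potential /potential big1 => [|mu Mmu]; last exact/weight_eq0/far.
by rewrite /Rmin; case: Rle_dec; lra.
Qed.

Lemma weight_moves_sum (mu s : assignment n) :
  ((dist mu s <= N)%nat -> INR (Xcnt Phi (Delta mu s) s) <= INR k * INR (Ucnt Phi s) / 10) ->
  \big[Rplus/0]_(i in Uset Phi s) \big[Rplus/0]_(j < k) weight (dist mu (flip s (lvar (Phi i j))))
  <= INR (Ucnt Phi s) * INR k *
     (weight (dist mu s) + (if dist mu s == N then 2 ^ c / 2 ^ N else 0)).
Proof.
move=> drift; rewrite sumR_moves_dist.
have K0 : 0 <= INR (Ucnt Phi s) * INR k by apply: Rmult_le_pos; apply: pos_INR.
have e0 : 0 <= (if dist mu s == N then 2 ^ c / 2 ^ N else 0).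
  by case: ifP => _; [apply: pow2_ratio_ge0 | lra].
have := weight_ge0 (dist mu s).
case: (leqP (dist mu s) N) => dN w0.
- apply: drift_bound => //; last by have := weight_pred (dist mu s); case: ifP => _; lra.
  + by split; [apply: pos_INR | have := drift dN; lra].
  + by split; [apply: weight_ge0 | apply: weightS].
- have dN1 : (N <= (dist mu s).-1)%nat by rewrite -ltnS (ltn_predK dN).
  rewrite (weight_eq0 dN1) (weight_eq0 (leqW (ltnW dN))).
  by have := Rmult_le_pos _ _ K0 (Rplus_le_le_0_compat _ _ w0 e0); lra.
Qed.

Hypothesis k_gt0 : (0 < k)%nat.
Hypothesis c_lt_N : (c < N)%nat.
Hypothesis mist_near : forall s, inT Phi s -> exists2 mu, mu \in M & (dist mu s <= c)%nat.
Hypothesis mist_drift : forall mu s, mu \in M -> (dist mu s <= N)%nat -> ~ inT Phi s ->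
  INR (Xcnt Phi (Delta mu s) s) <= INR k * INR (Ucnt Phi s) / 10.
Hypothesis mist_sphere_sparse : forall s, (#|[set mu in M | dist mu s == N]| <= k)%nat.

Lemma capped_potential_inT s : inT Phi s -> capped_potential s = 1.
Proof. by case/mist_near => mu; apply: capped_potential_near. Qed.

Lemma potential_moves_sum s : ~ inT Phi s ->
  \big[Rplus/0]_(i in Uset Phi s) \big[Rplus/0]_(j < k) potential (flip s (lvar (Phi i j)))
  <= INR (Ucnt Phi s) * INR k * (potential s + INR k * (2 ^ c / 2 ^ N)).
Proof.
move=> notT; rewrite /potential.
have -> : \big[Rplus/0]_(i in Uset Phi s) \big[Rplus/0]_(j < k)
      \big[Rplus/0]_(mu in M) weight (dist mu (flip s (lvar (Phi i j))))
  = \big[Rplus/0]_(mu in M) \big[Rplus/0]_(i in Uset Phi s) \big[Rplus/0]_(j < k)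
      weight (dist mu (flip s (lvar (Phi i j)))).
  by rewrite [in RHS]exchange_big; apply: eq_bigr => i _; rewrite exchange_big.
apply: Rle_trans.
  by apply: sumR_le => mu Mmu; apply: weight_moves_sum => dN; apply: mist_drift.
rewrite sumR_mull sumR_split /=; apply: Rmult_le_compat_l.
  by apply: Rmult_le_pos; apply: pos_INR.
apply: Rplus_le_compat_l; rewrite -big_mkcondr /=.
rewrite (eq_bigl (fun mu => mu \in [set mu in M | dist mu s == N])); last by move=> mu; rewrite inE.
rewrite sumR_const; apply: Rmult_le_compat_r; first exact: pow2_ratio_ge0.
exact/le_INR/leP/mist_sphere_sparse.
Qed.

Lemma capped_potential_step s : ~~ satisfies Phi s ->
  / (INR (Ucnt Phi s) * INR k) * \big[Rplus/0]_(i in Uset Phi s) \big[Rplus/0]_(j < k)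
     capped_potential (flip s (lvar (Phi i j)))
  <= capped_potential s + INR k * (2 ^ c / 2 ^ N).
Proof.
move=> unsat; set S := \big[Rplus/0]_(i in Uset Phi s) _.
have K0 : 0 < INR (Ucnt Phi s) * INR k.
  by apply: Rmult_lt_0_compat; apply: lt_0_INR; apply/ltP; rewrite // lt0n.
have leak0 : 0 <= INR k * (2 ^ c / 2 ^ N).
  by apply: Rmult_le_pos; [apply: pos_INR | apply: pow2_ratio_ge0].
have SK : / (INR (Ucnt Phi s) * INR k) * S <= 1.
  apply: (Rmult_le_reg_l _ _ _ K0); rewrite -Rmult_assoc Rinv_r ?Rmult_1_l ?Rmult_1_r; last lra.
  rewrite -[X in _ <= X]Rmult_1_r -sumR_moves_const.
  by apply: sumR_le => i _; apply: sumR_le => j _; case: (capped_potential_bounds (flip s (lvar (Phi i j)))).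
case: (classic (inT Phi s)) => [Ts | notT]; first by rewrite capped_potential_inT //; lra.
have SH : / (INR (Ucnt Phi s) * INR k) * S <= potential s + INR k * (2 ^ c / 2 ^ N).
  apply: (Rmult_le_reg_l _ _ _ K0); rewrite -Rmult_assoc Rinv_r; last lra.
  rewrite Rmult_1_l; apply: Rle_trans (potential_moves_sum notT).
  by apply: sumR_le => i _; apply: sumR_le => j _; apply: Rmin_r.
by rewrite /capped_potential /Rmin; case: Rle_dec => _; lra.
Qed.

Lemma walk_succ_le_capped_potential r s :
  walk_succ Phi r s <= capped_potential s + INR r * (INR k * (2 ^ c / 2 ^ N)).
Proof.
have leak0 : 0 <= INR k * (2 ^ c / 2 ^ N).
  by apply: Rmult_le_pos; [apply: pos_INR | apply: pow2_ratio_ge0].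
elim: r s => [|r IH] s; rewrite [walk_succ _ _ _]/=; case: ifP => [sat | unsat].
- by rewrite INR_0 capped_potential_inT; [lra | exact: satisfies_inT].
- by rewrite INR_0; case: (capped_potential_bounds s); lra.
- rewrite S_INR capped_potential_inT; last exact: satisfies_inT.
  by have := pos_INR r; nra.
set K := INR (Ucnt Phi s) * INR k.
have Kp : 0 < K.
  by apply: Rmult_lt_0_compat; apply: lt_0_INR; apply/ltP; rewrite // lt0n; apply/negbT.
have := capped_potential_step (negbT unsat); rewrite -/K S_INR => step.
apply: Rle_trans (Rmult_le_compat_l _ _ _ (Rlt_le _ _ (Rinv_0_lt_compat _ Kp))
  (sumR_le (fun i _ => sumR_le (fun j _ => IH _)))) _.
rewrite (eq_bigr _ (fun i _ => sumR_split _ _ _)) sumR_split sumR_moves_const -/K.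
rewrite Rmult_plus_distr_l -Rmult_assoc Rinv_l; last lra.
rewrite Rmult_1_l; apply: Rle_trans (Rplus_le_compat_r _ _ _ step) _.
by right; ring.
Qed.

Lemma suc_le_mist_density omega :
  suc Phi omega <= INR #|[set s | [exists mu in M, (dist mu s < N)%nat]]| / 2 ^ n
                   + INR omega * (INR k * (2 ^ c / 2 ^ N)).
Proof.
set D := [set s | _]; have p0 : 0 < 2 ^ n by apply: pow_lt; lra.
rewrite /suc; apply: Rle_trans.
  apply: Rmult_le_compat_l; first exact/Rlt_le/Rinv_0_lt_compat.
  by apply: sumR_le => s _; apply: walk_succ_le_capped_potential.
have capD : \big[Rplus/0]_(s : assignment n) capped_potential s <= INR #|D|.
  rewrite -[INR #|D|]Rmult_1_r -sumR_const [X in _ <= X]big_mkcond; apply: sumR_le => s _.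
  case: ifP => [_ | /negbT]; first by case: (capped_potential_bounds s).
  rewrite inE negb_exists => /forallP far; rewrite capped_potential_far; first lra.
  by move=> mu Mmu; have := far mu; rewrite Mmu /= -leqNgt.
rewrite sumR_split sumR_const card_ffun card_bool card_ord INR_expn2.
rewrite Rmult_plus_distr_l -Rmult_assoc Rinv_l; last lra.
rewrite Rmult_1_l; apply: Rplus_le_compat_r; rewrite /Rdiv Rmult_comm.
by apply: Rmult_le_compat_r capD; apply/Rlt_le/Rinv_0_lt_compat.
Qed.

End Potential.

Lemma exp_le_exp x y : x <= y -> exp x <= exp y.
Proof. by case=> [/exp_increasing/Rlt_le | ->] //; apply: Rle_refl. Qed.

Lemma pow2_ratio_le_exp (c N : nat) t :
  0 <= t -> INR c <= 2 * t -> 10 * t - 1 <= INR N -> 2 ^ c / 2 ^ N <= exp (1 - 4 * t).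
Proof.
move=> t0 ct Nt.
have pow2E (p : nat) : 2 ^ p = exp (INR p * ln 2).
  by rewrite -ln_pow ?exp_ln //; [apply: pow_lt|]; lra.
have ln2_le1 : ln 2 <= 1.
  rewrite -[X in _ <= X]ln_exp; apply: Rlt_le; apply: ln_increasing; first lra.
  by have := exp_ineq1 1 R1_neq_R0; lra.
rewrite !pow2E /Rdiv -exp_Ropp -exp_plus; apply: exp_le_exp.
have := ln_lt_2; have : (INR c - INR N) * ln 2 <= (1 - 8 * t) * ln 2.
  by apply: Rmult_le_compat_r; [have := ln_lt_2 | ]; lra.
by nra.
Qed.

Lemma error_budget (K a t w r : R) :
  3 <= K <= a -> K * a <= t -> 0 <= w <= exp a + 1 -> 0 <= r <= exp (1 - 4 * t) ->
  exp (- (2 * a)) + w * (K * r) <= exp (- a).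
Proof.
move=> [K3 Ka] Kat [w0 wa] [r0 rt].
have ea : exp (- a) <= / 4.
  by rewrite exp_Ropp; apply: Rinv_le_contravar; [lra | have := exp_ineq1_le a; lra].
have e9a : exp (1 - 9 * a) <= / 4 by apply: Rle_trans ea; apply: exp_le_exp; lra.
have : w * (K * r) <= (2 * exp a) * (exp K * exp (1 - 4 * t)).
  have : 1 <= exp a by have := exp_ineq1_le a; lra.
  have : K <= exp K by have := exp_ineq1_le K; lra.
  by move=> *; apply: Rmult_le_compat; try apply: Rmult_le_compat; try nra.
have : (2 * exp a) * (exp K * exp (1 - 4 * t)) <= 2 * (exp (- a) * exp (1 - 9 * a)).
  rewrite -!exp_plus Rmult_assoc -!exp_plus; apply: Rmult_le_compat_l; first lra.
  by apply: exp_le_exp; nra.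
have -> : exp (- (2 * a)) = exp (- a) * exp (- a) by rewrite -exp_plus; f_equal; ring.
by have := exp_pos (- a); have := exp_pos (1 - 9 * a); nra.
Qed.

Definition floor_nat (x : R) : nat := Z.to_nat (Int_part x).

Lemma Int_part_ge0 x : 0 <= x -> (0 <= Int_part x)%Z.
Proof.
move=> x0; have [_ hi] := base_Int_part x.
have : (-1 < Int_part x)%Z by apply: lt_IZR; lra.
lia.
Qed.

Lemma floor_nat_bounds x : 0 <= x -> INR (floor_nat x) <= x < INR (floor_nat x) + 1.
Proof.
move=> x0; have [lo hi] := base_Int_part x.
by rewrite /floor_nat INR_IZR_INZ Z2Nat.id; [lra | apply: Int_part_ge0].
Qed.

Lemma le_floor_nat (d : nat) x : INR d <= x -> (d <= floor_nat x)%nat.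
Proof.
move=> dx; have [_ hi] := floor_nat_bounds (Rle_trans _ _ _ (pos_INR d) dx).
have : INR d < INR (floor_nat x + 1) by rewrite plus_INR /=; lra.
by move=> /INR_lt /ltP; rewrite addn1 ltnS.
Qed.

Lemma floor_nat_le_mono x y : 0 <= x <= y -> (floor_nat x <= floor_nat y)%nat.
Proof. by move=> [x0 xy]; apply: le_floor_nat; case: (floor_nat_bounds x0); lra. Qed.

Lemma inD_0_l n k (s t : assignment n) r : 0 <= r * kappa k * INR n ->
  inD k s 0 r t = (dist s t <= floor_nat (r * kappa k * INR n))%nat.
Proof.
move=> /Int_part_ge0 x0; rewrite /inD !Rmult_0_l -INR_0 Int_part_INR /floor_nat.
by case: Z.leb_spec; case: Z.leb_spec; case: leP; lia.
Qed.

Lemma ceil_nat_le x : 0 <= x -> INR (ceil_nat x) <= x + 1.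
Proof.
move=> x0; rewrite /ceil_nat; have [lo hi] := base_Int_part (- x).
case: (Z_lt_le_dec (- Int_part (- x)) 0) => z0.
  by rewrite (_ : Z.to_nat _ = 0%nat) /=; [lra | lia].
by rewrite INR_IZR_INZ Z2Nat.id // opp_IZR; lra.
Qed.

Lemma kappa_n_ge k n : 3 <= INR k -> 0 <= INR n -> INR n / INR k <= kappa k * INR n.
Proof.
move=> k3 n0; have : 1 <= ln (INR k).
  by apply: Rnot_lt_le => /exp_increasing; rewrite exp_ln; have := exp_le_3; lra.
rewrite /kappa /Rdiv => lnk.
have : 0 <= (ln (INR k) - 1) * / INR k * INR n.
  by apply: Rmult_le_pos => //; apply: Rmult_le_pos; [lra | apply/Rlt_le/Rinv_0_lt_compat; lra].
lra.
Qed.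

Lemma kappa_scale k n : (3 <= k)%nat -> (k * k * k <= n)%nat ->
  3 <= INR k <= INR n / INR k ^ 2 /\ INR k * (INR n / INR k ^ 2) <= kappa k * INR n.
Proof.
move=> /leP/le_INR k3 /leP/le_INR; rewrite !mult_INR => nk.
have K3 : 3 <= INR k by move: k3; rewrite [INR 3]/=; lra.
have k2 : 0 < INR k ^ 2 by apply: pow_lt; lra.
split; first split => //.
  apply: (Rmult_le_reg_r _ _ _ k2); rewrite /Rdiv Rmult_assoc Rinv_l; lra.
have -> : INR k * (INR n / INR k ^ 2) = INR n / INR k by field; lra.
by apply: kappa_n_ge => //; apply: pos_INR.
Qed.

Lemma suc_le_quasirandom n k m (Phi : kcnf n k m) omega :
  (0 < k)%nat -> 0 <= kappa k * INR n ->
  (floor_nat (2 * kappa k * INR n) < floor_nat (10 * kappa k * INR n))%nat ->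
  quasirandom Phi ->
  suc Phi omega <= exp (- (2 * INR n / INR k ^ 2))
    + INR omega * (INR k * (2 ^ floor_nat (2 * kappa k * INR n)
                            / 2 ^ floor_nat (10 * kappa k * INR n))).
Proof.
move=> k_gt0 t0 cN [M [[_ [_ cover]] [Q1 [Q2 Q3]]]].
have r0 r : 0 <= r -> 0 <= r * kappa k * INR n.
  by move=> ?; rewrite Rmult_assoc; apply: Rmult_le_pos.
apply: Rle_trans (suc_le_mist_density (M := M) k_gt0 cN _ _ _ omega) _.
- by move=> s /cover [mu Mmu d2]; exists mu => //; apply: le_floor_nat.
- move=> mu s Mmu dN; apply: Q3 => //; rewrite inD_0_l ?r0 //; last lra.
  by apply: leq_trans dN _; apply: floor_nat_le_mono; split; [apply: r0 | nra]; lra.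
- move=> s; apply: leq_trans (Q2 s); apply: subset_leq_card; apply/subsetP => mu.
  rewrite !inE inD_0_l ?r0; last lra.
  by case/andP=> -> /eqP dN; rewrite dist_sym dN leqnn.
apply: Rplus_le_compat_r; apply: (Rmult_le_reg_r (2 ^ n)); first by apply: pow_lt; lra.
rewrite /Rdiv Rmult_assoc Rinv_l ?Rmult_1_r; last by apply: pow_nonzero; lra.
rewrite [X in _ <= X]Rmult_comm; apply: Rle_trans Q1.
apply/le_INR/leP/subset_leq_card/subsetP => s; rewrite !inE => /existsP [mu /andP [Mmu dN]].
by apply/existsP; exists mu; rewrite Mmu inD_0_l ?r0 //; [apply: ltnW | lra].
Qed.

Close Scope R_scope.

Theorem proposition2 :
  exists k0 : nat, forall k : nat, k0 <= k ->
  exists n0 : nat, forall n : nat, n0 <= n ->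
  forall (m : nat) (Phi : kcnf n k m),
    quasirandom Phi ->
    (suc Phi (ceil_nat (exp (INR n / INR k ^ 2)))
       <= exp (- (INR n / INR k ^ 2)))%R.
Proof.
exists 3 => k k3; exists (k * k * k) => n nk m Phi qr.
have [[K3 Ka] Kat] := kappa_scale k3 nk.
set a := (INR n / INR k ^ 2)%R in Ka Kat *; set t := (kappa k * INR n)%R in Kat.
have t9 : (9 <= t)%R by nra.
have Et r : (r * kappa k * INR n = r * t)%R by rewrite /t Rmult_assoc.
have [c2t _] := floor_nat_bounds (x := 2 * kappa k * INR n) ltac:(rewrite Et; lra).
have [_ N10t] := floor_nat_bounds (x := 10 * kappa k * INR n) ltac:(rewrite Et; lra).
rewrite !Et in c2t N10t.
have cN : floor_nat (2 * kappa k * INR n) < floor_nat (10 * kappa k * INR n).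
  by rewrite !Et; apply/ltP/INR_lt; lra.
have k0 : 0 < k by apply: leq_trans k3.
have t0 : (0 <= t)%R by lra.
apply: Rle_trans (suc_le_quasirandom _ k0 t0 cN qr) _.
rewrite /Rdiv Rmult_assoc -/(Rdiv (INR n) (INR k ^ 2)) -/a.
apply: (error_budget (t := t)) => //.
  by split; [apply: pos_INR | apply/ceil_nat_le/Rlt_le/exp_pos].
split; first exact: pow2_ratio_ge0.
by rewrite !Et; apply: pow2_ratio_le_exp; lra.
Qed.
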